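(* Let $\kappa<\lambda$ be regular uncountable cardinals and suppose there is a $\square(\lambda,<\kappa)$-sequence that is not full. Then $\mathrm{Refl}(2,\lambda)$ fails, i.e., there are two stationary subsets of $\lambda$ that do not reflect simultaneously.
   Context: For a set of ordinals $A$, $\mathrm{acc}(A)$ is the set of $\beta<\sup\{\alpha+1\mid\alpha\in A\}$ with $\beta=\sup(A\cap\beta)$. A coherent sequence of length $\lambda$ and width $<\eta$ is $\mathcal{C}=\langle\mathcal{C}_\alpha\mid\alpha<\lambda\rangle$ where each $\mathcal{C}_\alpha$ is a nonempty set of fewer than $\eta$ closed unbounded subsets of $\alpha$ (for successor $\alpha=\beta+1$, $\mathcal{C}_\alpha=\{\{\beta\}\}$), such that for all $\beta<\lambda$, $C\in\mathcal{C}_\beta$ and $\alpha\in\mathrm{acc}(C)$, $C\cap\alpha\in\mathcal{C}_\alpha$. A thread is a club $D\subseteq\lambda$ with $D\cap\alpha\in\mathcal{C}_\alpha$ for all $\alpha\in\mathrm{acc}(D)$. A $\square(\lambda,<\eta)$-sequence is a coherent sequence of length $\lambda$ and width $<\eta$ with no thread. For a coherent sequence $\mathcal{C}$, let $A_{\mathcal{C}}$ be the set of $\alpha<\lambda$ for which there is a club $D_\alpha\subseteq\lambda$ such that for every $\beta\in D_\alpha$, $\alpha\in\bigcup_{C\in\mathcal{C}_\beta}\mathrm{acc}(C)$; $\mathcal{C}$ is full if $A_{\mathcal{C}}$ is unbounded in $\lambda$. A stationary $S\subseteq\lambda$ reflects at $\alpha<\lambda$ if $\mathrm{cf}(\alpha)>\omega$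 and $S\cap\alpha$ is stationary in $\alpha$; two stationary sets reflect simultaneously if both reflect at a common $\alpha<\lambda$. *)

(* Ordinals below lambda are modelled as the elements of a
   type L carrying a strict well-order [lt]; lambda is the order type of L.
   Sets of ordinals are predicates [L -> Prop]. *)
From Stdlib Require Import Classical.
Set Implicit Arguments.

Section Ord.
Variable L : Type.
Variable lt : L -> L -> Prop.

Definition le (x y : L) : Prop := lt x y \/ x = y.

Definition strict_wellorder : Prop :=
  (forall x, ~ lt x x) /\
  (forall x y z, lt x y -> lt y z -> lt x z) /\
  (forall x y, lt x y \/ x = y \/ lt y x) /\
  well_founded lt.

(* beta = sup (A /\ beta)  (with sup of the empty set = 0) *)
Definition sup_below (A : L -> Prop) (b : L) : Prop :=
  forall g, lt g b -> exists d, A d /\ lt g d /\ lt d b.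

(* acc(A) as in the paper: beta < sup{alpha+1 | alpha in A} and beta = sup(A cap beta) *)
Definition acc (A : L -> Prop) (b : L) : Prop :=
  (exists a, A a /\ le b a) /\ sup_below A b.

Definition club_in (a : L) (C : L -> Prop) : Prop :=
  (forall x, C x -> lt x a) /\
  (forall b, lt b a -> exists g, C g /\ le b g) /\
  (forall g, lt g a -> (exists x, lt x g) -> sup_below C g -> C g).

Definition club (C : L -> Prop) : Prop :=
  (forall b, exists g, C g /\ le b g) /\
  (forall g, (exists x, lt x g) -> sup_below C g -> C g).

Definition is_succ (a b : L) : Prop := lt b a /\ forall x, lt b x -> le a x.

Definition card_lt (X : (L -> Prop) -> Prop) (k : L) : Prop :=
  exists g, lt g k /\ exists f : (L -> Prop) -> L,
    (forall E, X E -> lt (f E) g) /\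
    (forall E E', X E -> X E' -> f E = f E' -> forall x, E x <-> E' x).

(* "C cap a \in S" for a set S of sets (membership up to extensionality) *)
Definition restr_in (S : (L -> Prop) -> Prop) (C : L -> Prop) (a : L) : Prop :=
  exists E, S E /\ forall x, E x <-> (C x /\ lt x a).

Definition coherent_seq (k : L) (Cs : L -> (L -> Prop) -> Prop) : Prop :=
  (forall a, exists C, Cs a C) /\
  (forall a C, Cs a C -> club_in a C) /\
  (forall a, card_lt (Cs a) k) /\
  (forall a b, is_succ a b -> forall C, Cs a C <-> (forall x, C x <-> x = b)) /\
  (forall b C, Cs b C -> forall a, acc C a -> restr_in (Cs a) C a).

Definition thread (Cs : L -> (L -> Prop) -> Prop) (D : L -> Prop) : Prop :=
  club D /\ forall a, acc D a -> restr_in (Cs a) D a.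

Definition square_seq (k : L) (Cs : L -> (L -> Prop) -> Prop) : Prop :=
  coherent_seq k Cs /\ ~ exists D, thread Cs D.

Definition A_set (Cs : L -> (L -> Prop) -> Prop) (a : L) : Prop :=
  exists D, club D /\ forall b, D b -> exists C, Cs b C /\ acc C a.

Definition full (Cs : L -> (L -> Prop) -> Prop) : Prop :=
  forall b, exists a, A_set Cs a /\ le b a.

Definition stationary (S : L -> Prop) : Prop :=
  forall D, club D -> exists x, S x /\ D x.

Definition uncountable_cof (a : L) : Prop :=
  (exists x, lt x a) /\
  ~ exists g : nat -> L, (forall n, lt (g n) a) /\
                         (forall b, lt b a -> exists n, le b (g n)).

Definition stationary_in (a : L) (S : L -> Prop) : Prop :=
  forall C, club_in a C -> exists x, S x /\ C x.

Definition reflects_at (S : L -> Prop) (a : L) : Prop :=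
  uncountable_cof a /\ stationary_in a (fun x => S x /\ lt x a).

Definition regular_uncountable_top : Prop :=
  (forall a (f : L -> L), exists g, forall b, lt b a -> lt (f b) g) /\
  ~ exists f : L -> nat, forall x y, f x = f y -> x = y.

Definition regular_uncountable_below (k : L) : Prop :=
  (forall a, lt a k -> forall f : L -> L, (forall b, lt b a -> lt (f b) k) ->
     exists g, lt g k /\ forall b, lt b a -> lt (f b) g) /\
  ~ exists f : L -> nat, forall x y, lt x k -> lt y k -> f x = f y -> x = y.
End Ord.

From Stdlib Require Import Classical ClassicalEpsilon FunctionalExtensionality.

(* Let b witness non-fullness. For a above b let S_a be the set of x > a such that a is an
   accumulation point of no C in Cs x, and T_a the set of x > a such that a is an accumulation
   point of every C in Cs x. Since a is not in A_Cs, S_a is stationary. By coherence S_a and T_a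
   never reflect together: at a reflection point g, pick C in Cs g and points x1 in S_a, x2 in
   T_a among the accumulation points of C above a; then C meets x1 and x2 in members of Cs x1
   and Cs x2, and a is an accumulation point of both or of neither. Finally some T_a with a >= b
   is stationary: otherwise choose clubs E_a disjoint from T_a and a point beta of cofinality
   >= kappa in their diagonal intersection; the fewer than kappa clubs in Cs beta then have a
   common accumulation point s > b, so beta lies in T_s and in E_s. *)

Set Implicit Arguments.

Lemma dependent_choice (A : Type) (P : A -> Prop) (R : A -> A -> Prop) (x0 : A) :
  P x0 -> (forall u, P u -> exists v, P v /\ R u v) ->
  exists V : nat -> A, V 0 = x0 /\ forall n, P (V n) /\ R (V n) (V (S n)).
Proof.
  intros H0 Hstep.
  destruct (choice (fun u v => P u -> P v /\ R u v)) as [f Hf].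
  { intros u. destruct (classic (P u)) as [Hu|Hu].
    - destruct (Hstep u Hu) as [v Hv]. exists v. auto.
    - exists u. tauto. }
  assert (HP : forall n, P (Nat.iter n f x0)).
  { induction n as [|n IH]; [exact H0|]. apply (Hf _ IH). }
  exists (fun n => Nat.iter n f x0). split; [reflexivity|].
  intros n. split; [apply HP|]. apply (Hf _ (HP n)).
Qed.

Section Ordinals.
Variable L : Type.
Variable lt : L -> L -> Prop.
Hypothesis Hwo : strict_wellorder lt.

Lemma lt_irrefl x : ~ lt x x.
Proof. apply Hwo. Qed.

Lemma lt_trans x y z : lt x y -> lt y z -> lt x z.
Proof. apply Hwo. Qed.

Lemma lt_trichotomy x y : lt x y \/ x = y \/ lt y x.
Proof. apply Hwo. Qed.

Lemma lt_wf : well_founded lt.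
Proof. apply Hwo. Qed.

Lemma le_lt_trans x y z : le lt x y -> lt y z -> lt x z.
Proof. intros [H|<-] H2; [exact (lt_trans H H2)|exact H2]. Qed.

Lemma lt_le_trans x y z : lt x y -> le lt y z -> lt x z.
Proof. intros H [H2|<-]; [exact (lt_trans H H2)|exact H]. Qed.

Lemma le_refl x : le lt x x.
Proof. right; reflexivity. Qed.

Lemma not_lt_le x y : ~ lt x y -> le lt y x.
Proof. intros H. destruct (lt_trichotomy x y) as [h|[h|h]]; [tauto|right; auto|left; auto]. Qed.

Lemma le_not_lt x y : le lt x y -> ~ lt y x.
Proof. intros H H2. exact (lt_irrefl (le_lt_trans H H2)). Qed.

Lemma le_max x y : exists z, le lt x z /\ le lt y z /\ (z = x \/ z = y).
Proof.
  destruct (lt_trichotomy x y) as [h|[<-|h]].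
  - exists y. repeat split; [left; exact h|apply le_refl|auto].
  - exists x. repeat split; [apply le_refl|apply le_refl|auto].
  - exists x. repeat split; [apply le_refl|left; exact h|auto].
Qed.

Lemma exists_least (P : L -> Prop) :
  (exists x, P x) -> exists x, P x /\ forall y, lt y x -> ~ P y.
Proof.
  intros [x Hx]. revert Hx. induction x as [x IH] using (well_founded_ind lt_wf).
  intros Hx. destruct (classic (exists y, lt y x /\ P y)) as [[y [h1 h2]]|H].
  - exact (IH y h1 h2).
  - exists x. split; [exact Hx|]. intros y h1 h2. apply H. eauto.
Qed.

Lemma least_strict_bound (P : L -> Prop) : (exists u, forall x, P x -> lt x u) ->
  exists s, (forall x, P x -> lt x s) /\ (forall y, lt y s -> exists x, P x /\ le lt y x) /\
    (forall u, (forall x, P x -> lt x u) -> le lt s u).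
Proof.
  intros Hb. destruct (exists_least _ Hb) as [s [Hs Hmin]].
  exists s. split; [exact Hs|split].
  - intros y hy. destruct (not_all_ex_not _ _ (Hmin y hy)) as [x Hx].
    apply imply_to_and in Hx as [h1 h2]. exists x. split; [exact h1|apply not_lt_le; exact h2].
  - intros u Hu. apply not_lt_le. intros h. exact (Hmin u h Hu).
Qed.

Lemma incr_seq_sup (V : nat -> L) :
  (forall n, lt (V n) (V (S n))) -> (exists u, forall n, lt (V n) u) ->
  exists s, (forall n, lt (V n) s) /\ (forall y, lt y s -> exists n, lt y (V n)) /\
    (forall u, (forall n, lt (V n) u) -> le lt s u).
Proof.
  intros Hinc [u Hu]. destruct (least_strict_bound (fun x => exists n, x = V n)) as [s [h1 [h2 h3]]].
  { exists u. intros x [n ->]. apply Hu. }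
  exists s. repeat split.
  - intros n. apply h1. eauto.
  - intros y hy. destruct (h2 y hy) as [x [[n ->] hle]]. exists (S n). exact (le_lt_trans hle (Hinc n)).
  - intros u' Hu'. apply h3. intros x [n ->]. apply Hu'.
Qed.

Lemma sup_below_interleaved (C : L -> Prop) (V : nat -> L) s :
  (forall n, exists y, C y /\ lt (V n) y /\ le lt y (V (S n))) ->
  (forall n, lt (V n) s) -> (forall y, lt y s -> exists n, lt y (V n)) ->
  sup_below lt C s.
Proof.
  intros Hint Hs Hcof y hy. destruct (Hcof y hy) as [n hn].
  destruct (Hint n) as [d [hd1 [hd2 hd3]]].
  exists d. repeat split; [exact hd1|exact (lt_trans hn hd2)|exact (le_lt_trans hd3 (Hs (S n)))].
Qed.

Lemma acc_restrict C E a b : lt a b -> sup_below lt C b ->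
  (forall x, E x <-> C x /\ lt x b) -> (acc lt C a <-> acc lt E a).
Proof.
  intros hab Hsb HE. split.
  - intros [_ Hs]. split.
    + destruct (Hsb a hab) as [d [hd1 [hd2 hd3]]]. exists d. split; [apply HE; auto|left; auto].
    + intros y hy. destruct (Hs y hy) as [d [hd1 [hd2 hd3]]]. exists d. split; [|auto].
      apply HE. split; [exact hd1|exact (lt_trans hd3 hab)].
  - intros [[x [hx1 hx2]] Hs]. split.
    + exists x. split; [apply HE; exact hx1|exact hx2].
    + intros y hy. destruct (Hs y hy) as [d [hd1 hd2]]. exists d. split; [apply HE; exact hd1|exact hd2].
Qed.

Lemma uncountable_cof_limit g x : uncountable_cof lt g -> lt x g -> exists y, lt x y /\ lt y g.
Proof.
  intros [_ Hn] hx. apply NNPP. intros H. apply Hn. exists (fun _ => x). split; [auto|].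
  intros b hb. exists 0. apply not_lt_le. intros h. apply H. eauto.
Qed.

Lemma uncountable_cof_seq_bound g (V : nat -> L) : uncountable_cof lt g ->
  (forall n, lt (V n) g) -> exists u, lt u g /\ forall n, lt (V n) u.
Proof.
  intros [_ Hn] HV. apply NNPP. intros Hc. apply Hn. exists V. split; [exact HV|].
  intros x hx. apply NNPP. intros Hx. apply Hc. exists x. split; [exact hx|].
  intros n. apply NNPP. intros h. apply Hx. exists n. apply not_lt_le. exact h.
Qed.

Lemma acc_club_in g C a : uncountable_cof lt g -> club_in lt g C -> lt a g ->
  club_in lt g (fun x => acc lt C x /\ lt a x).
Proof.
  intros Hg [Cbd [Cunb Ccl]] hag. split; [|split].
  - intros x [[[c [hc1 hc2]] _] _]. exact (le_lt_trans hc2 (Cbd c hc1)).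
  - intros b hb. destruct (le_max b a) as [m [hbm [ham hm]]].
    assert (hmg : lt m g) by (destruct hm as [->| ->]; assumption).
    destruct (dependent_choice (fun u => lt u g) (fun u v => lt u v /\ C v) m hmg) as [V [HV0 HV]].
    { intros u hu. destruct (uncountable_cof_limit Hg hu) as [y [hy1 hy2]].
      destruct (Cunb y hy2) as [v [hv1 hv2]].
      exists v. repeat split; [exact (Cbd v hv1)|exact (lt_le_trans hy1 hv2)|exact hv1]. }
    destruct (uncountable_cof_seq_bound V Hg (fun n => proj1 (HV n))) as [u [hug Hu]].
    destruct (incr_seq_sup V (fun n => proj1 (proj2 (HV n))) (ex_intro _ u Hu))
      as [s [Hs [Hcof Hleast]]].
    assert (hsg : lt s g) by exact (le_lt_trans (Hleast u Hu) hug).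
    assert (hms : lt m s) by (rewrite <- HV0; apply Hs).
    exists s. split; [split; [split|]|].
    + exact (Cunb s hsg).
    + apply (sup_below_interleaved C V); [|exact Hs|exact Hcof].
      intros n. exists (V (S n)). repeat split; [apply HV|apply HV|apply le_refl].
    + exact (le_lt_trans ham hms).
    + left. exact (le_lt_trans hbm hms).
  - intros x hx [z hz] Hs. split; [split|].
    + apply Cunb. exact hx.
    + intros y hy. destruct (Hs y hy) as [d [[[_ hd] _] [hd2 hd3]]].
      destruct (hd y hd2) as [c [hc1 [hc2 hc3]]].
      exists c. repeat split; [exact hc1|exact hc2|exact (lt_trans hc3 hd3)].
    + destruct (Hs z hz) as [d [[_ hd] [_ hd3]]]. exact (lt_trans hd hd3).
Qed.
Hypothesis Hlam : regular_uncountable_top lt.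

Lemma exists_lt_pair : exists a b, lt b a.
Proof.
  apply NNPP. intros Hn. apply (proj2 Hlam). exists (fun _ => 0). intros x1 x2 _.
  destruct (lt_trichotomy x1 x2) as [h|[h|h]]; [|exact h|]; exfalso; apply Hn; eauto.
Qed.

Lemma no_max x : exists y, lt x y.
Proof.
  destruct exists_lt_pair as [a [b hb]]. destruct (proj1 Hlam a (fun _ => x)) as [g Hg].
  exists g. exact (Hg b hb).
Qed.

Lemma exists_above2 x y : exists z, lt x z /\ lt y z.
Proof.
  destruct (le_max x y) as [m [h1 [h2 _]]]. destruct (no_max m) as [z hz].
  exists z. split; [exact (le_lt_trans h1 hz)|exact (le_lt_trans h2 hz)].
Qed.

Lemma club_above D a : club lt D -> club lt (fun x => D x /\ lt a x).
Proof.
  intros [Dunb Dcl]. split.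
  - intros y. destruct (exists_above2 y a) as [z [h1 h2]].
    destruct (Dunb z) as [g [hg1 hg2]].
    exists g. repeat split; [exact hg1|exact (lt_le_trans h2 hg2)|left; exact (lt_le_trans h1 hg2)].
  - intros g [x hx] Hs. split.
    + apply Dcl; [eauto|]. intros y hy. destruct (Hs y hy) as [d [[hd _] hd']]. eauto.
    + destruct (Hs x hx) as [d [[_ hd] [_ hd3]]]. exact (lt_trans hd hd3).
Qed.

Lemma exists_succ x : exists y, is_succ lt y x.
Proof.
  destruct (exists_least (lt x) (no_max x)) as [y [hxy Hmin]].
  exists y. split; [exact hxy|]. intros z hz. apply not_lt_le. intros h. exact (Hmin z h hz).
Qed.

Lemma exists_omega_enum : exists e : nat -> L,
  (forall n, lt (e n) (e (S n))) /\ (forall n x, lt x (e n) -> exists m, x = e m).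
Proof.
  destruct exists_lt_pair as [a _].
  destruct (exists_least (fun _ => True) (ex_intro _ a I)) as [m0 [_ Hm0]].
  destruct (dependent_choice (fun _ => True) (fun u v => is_succ lt v u) m0 I) as [e [He0 He]].
  { intros u _. destruct (exists_succ u) as [v hv]. exists v. auto. }
  exists e. split; [intros n; apply He|].
  induction n as [|n IH]; intros x hx.
  - rewrite He0 in hx. exfalso. exact (Hm0 x hx I).
  - destruct (lt_trichotomy x (e n)) as [h|[h|h]]; [exact (IH x h)|eauto|].
    exfalso. exact (le_not_lt (proj2 (proj2 (He n)) x h) hx).
Qed.

Lemma incr_seq_inj (e : nat -> L) : (forall n, lt (e n) (e (S n))) ->
  forall n m, e n = e m -> n = m.
Proof.
  intros Hinc.
  assert (Hmono : forall n m, (n < m)%nat -> lt (e n) (e m)).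
  { intros n m H. induction H; [apply Hinc|exact (lt_trans IHle (Hinc m))]. }
  intros n m H. destruct (PeanoNat.Nat.lt_total n m) as [h|[h|h]]; [|exact h|];
    apply Hmono in h; rewrite H in h; exfalso; exact (lt_irrefl h).
Qed.

Lemma exists_omega : exists w (idx : L -> nat),
  (forall n, exists x, lt x w /\ idx x = n) /\
  (forall x y, lt x w -> lt y w -> idx x = idx y -> x = y).
Proof.
  destruct exists_omega_enum as [e [Hinc Hdown]].
  assert (Hbd : exists u, forall n, lt (e n) u).
  { apply NNPP. intros Hn. apply (proj2 Hlam).
    destruct (choice (fun x m => x = e m)) as [idx Hidx].
    { intros x. apply NNPP. intros Hx. apply Hn. exists x. intros n. apply NNPP. intros h.
      apply Hx. apply (Hdown (S n)). exact (le_lt_trans (not_lt_le h) (Hinc n)). }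
    exists idx. intros x y h. rewrite (Hidx x), (Hidx y), h. reflexivity. }
  destruct (least_strict_bound (fun x => exists n, x = e n) ) as [w [Hw [Hwcof _]]].
  { destruct Hbd as [u Hu]. exists u. intros x [n ->]. apply Hu. }
  destruct (choice (fun x m => lt x w -> x = e m)) as [idx Hidx].
  { intros x. destruct (classic (lt x w)) as [hx|hx]; [|exists 0; tauto].
    destruct (Hwcof x hx) as [y [[n ->] hle]].
    destruct (Hdown (S n) x (le_lt_trans hle (Hinc n))) as [m hm]. exists m. auto. }
  exists w, idx. split.
  - intros n. assert (hn : lt (e n) w) by (apply Hw; eauto).
    exists (e n). split; [exact hn|]. symmetry. exact (incr_seq_inj e Hinc _ _ (Hidx _ hn)).
  - intros x y hx hy h. rewrite (Hidx x hx), (Hidx y hy), h. reflexivity.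
Qed.

Lemma omega_seq_bound (g : nat -> L) : exists u, forall n, lt (g n) u.
Proof.
  destruct exists_omega as [w [idx [Hsurj _]]].
  destruct (proj1 Hlam w (fun x => g (idx x))) as [u Hu].
  exists u. intros n. destruct (Hsurj n) as [x [hx <-]]. exact (Hu x hx).
Qed.

Lemma clubs_inter_unbounded (E : L -> L -> Prop) : (forall a, club lt (E a)) ->
  forall u, exists x, lt u x /\ forall a, lt a u -> E a x.
Proof.
  intros HE u.
  set (Q := fun v v' => forall a, lt a u -> exists y, E a y /\ lt v y /\ le lt y v').
  assert (Hstep : forall v, exists v', lt v v' /\ Q v v').
  { intros v. destruct (choice (fun a y => E a y /\ lt v y)) as [ny Hny].
    { intros a. destruct (no_max v) as [z hz]. destruct (proj1 (HE a) z) as [y [h1 h2]].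
      exists y. split; [exact h1|exact (lt_le_trans hz h2)]. }
    destruct (proj1 Hlam u ny) as [g Hg]. destruct (exists_above2 g v) as [v' [h1 h2]].
    exists v'. split; [exact h2|]. intros a ha. exists (ny a).
    repeat split; [apply Hny|apply Hny|left; exact (lt_trans (Hg a ha) h1)]. }
  destruct (dependent_choice (fun _ => True) (fun v v' => lt v v' /\ Q v v') u I) as [V [HV0 HV]].
  { intros v _. destruct (Hstep v) as [v' Hv']. exists v'. auto. }
  destruct (incr_seq_sup V (fun n => proj1 (proj2 (HV n))) (omega_seq_bound V))
    as [s [Hs [Hcof _]]].
  exists s. split; [rewrite <- HV0; apply Hs|]. intros a ha.
  apply (proj2 (HE a)); [exists (V 0); apply Hs|].
  apply (sup_below_interleaved (E a) V); [|exact Hs|exact Hcof].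
  intros n. exact (proj2 (proj2 (HV n)) a ha).
Qed.

(* Transfinite recursion h xi = next (sup of h below xi), with any upper bound >= b0 in place
   of the supremum. *)
Lemma exists_recursive_above (next : L -> L) (b0 : L) : exists h : L -> L,
  forall xi, exists s, le lt b0 s /\ (forall y, lt y xi -> lt (h y) s) /\ h xi = next s.
Proof.
  set (bound := fun xi (rec : forall y, lt y xi -> L) s =>
    le lt b0 s /\ forall y (p : lt y xi), lt (rec y p) s).
  set (body := fun xi rec => next (epsilon (inhabits b0) (bound xi rec))).
  set (h := Fix lt_wf (fun _ => L) body).
  assert (Hh : forall xi, h xi = body xi (fun y _ => h y)).
  { intros xi. apply (Fix_eq lt_wf (fun _ => L) body). intros x f g Hfg.
    replace g with f; [reflexivity|].
    apply functional_extensionality_dep. intros y.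
    apply functional_extensionality_dep. intros p. apply Hfg. }
  exists h. intros xi. rewrite Hh.
  set (s := epsilon (inhabits b0) (bound xi (fun y _ => h y))).
  assert (Hs : bound xi (fun y _ => h y) s).
  { apply epsilon_spec. destruct (proj1 Hlam xi h) as [g Hg].
    destruct (le_max g b0) as [m [h1 [h2 _]]].
    exists m. split; [exact h2|]. intros y p. exact (lt_le_trans (Hg y p) h1). }
  exists s. destruct Hs as [Hs1 Hs2]. split; [exact Hs1|split; [|reflexivity]].
  intros y p. exact (Hs2 y p).
Qed.

Variable k : L.
Hypothesis Hkap : regular_uncountable_below lt k.

Definition cof_ge (b : L) : Prop :=
  forall a, lt a k -> forall f : L -> L, (forall x, lt x a -> lt (f x) b) ->
    exists v, lt v b /\ forall x, lt x a -> lt (f x) v.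

Lemma omega_lt_kappa : exists w (idx : L -> nat),
  lt w k /\ forall n, exists x, lt x w /\ idx x = n.
Proof.
  destruct exists_omega as [w [idx [Hsurj Hinj]]]. exists w, idx. split; [|exact Hsurj].
  apply NNPP. intros Hn. apply (proj2 Hkap). exists idx. intros x y hx hy.
  apply Hinj; [exact (lt_le_trans hx (not_lt_le Hn))|exact (lt_le_trans hy (not_lt_le Hn))].
Qed.

Lemma cof_ge_seq_bound b (V : nat -> L) : cof_ge b ->
  (forall n, lt (V n) b) -> exists v, lt v b /\ forall n, lt (V n) v.
Proof.
  intros Hb HV. destruct omega_lt_kappa as [w [idx [hw Hsurj]]].
  destruct (Hb w hw (fun x => V (idx x))) as [v [hv Hv]]; [intros x _; apply HV|].
  exists v. split; [exact hv|]. intros n. destruct (Hsurj n) as [x [hx <-]]. exact (Hv x hx).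
Qed.

Lemma cof_ge_limit b u : cof_ge b -> lt u b -> exists y, lt u y /\ lt y b.
Proof.
  intros Hb hu. destruct (cof_ge_seq_bound (fun _ => u) Hb (fun _ => hu)) as [v [hv Hv]].
  exists v. split; [exact (Hv 0)|exact hv].
Qed.

Lemma small_family_next_point (X : (L -> Prop) -> Prop) b u : cof_ge b ->
  (forall C, X C -> club_in lt b C) -> card_lt lt X k -> (exists C, X C) -> lt u b ->
  exists v, lt v b /\ lt u v /\ forall C, X C -> exists y, C y /\ lt u y /\ le lt y v.
Proof.
  intros Hb Hcl [g [hg [f [Hf Hfinj]]]] [C0 HC0] hu.
  (* Members of X with the same index below g are equal, so one point per index suffices. *)
  destruct (choice (fun x y => lt u y /\ lt y b /\ forall C, X C -> f C = x -> C y)) as [phi Hphi].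
  { intros x. destruct (cof_ge_limit Hb hu) as [y0 [hy1 hy2]].
    destruct (classic (exists C, X C /\ f C = x)) as [[C1 [hC1 <-]]|Hno].
    - destruct (proj1 (proj2 (Hcl C1 hC1)) y0 hy2) as [y [hy hle]].
      exists y. repeat split; [exact (lt_le_trans hy1 hle)|exact (proj1 (Hcl C1 hC1) y hy)|].
      intros C hC hfC. apply (Hfinj C C1 hC hC1 hfC). exact hy.
    - exists y0. repeat split; [exact hy1|exact hy2|]. intros C hC hfC. exfalso. eauto. }
  destruct (Hb g hg phi (fun x _ => proj1 (proj2 (Hphi x)))) as [v [hv Hv]].
  exists v. repeat split; [exact hv|exact (lt_trans (proj1 (Hphi (f C0))) (Hv _ (Hf C0 HC0)))|].
  intros C hC. exists (phi (f C)).
  repeat split; [exact (proj2 (proj2 (Hphi (f C))) C hC eq_refl)|exact (proj1 (Hphi (f C)))|].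
  left. exact (Hv _ (Hf C hC)).
Qed.

Lemma small_family_common_acc (X : (L -> Prop) -> Prop) b0 b : cof_ge b -> lt b0 b ->
  (forall C, X C -> club_in lt b C) -> card_lt lt X k -> (exists C, X C) ->
  exists s, lt b0 s /\ lt s b /\ forall C, X C -> acc lt C s.
Proof.
  intros Hb hb0 Hcl Hcard HX.
  destruct (dependent_choice (fun u => lt u b)
    (fun u v => lt u v /\ forall C, X C -> exists y, C y /\ lt u y /\ le lt y v) b0 hb0)
    as [V [HV0 HV]].
  { intros u hu. destruct (small_family_next_point Hb Hcl Hcard HX hu) as [v Hv]. exists v. exact Hv. }
  destruct (cof_ge_seq_bound V Hb (fun n => proj1 (HV n))) as [ub [hub Hub]].
  destruct (incr_seq_sup V (fun n => proj1 (proj2 (HV n))) (ex_intro _ ub Hub))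
    as [s [Hs [Hcof Hleast]]].
  assert (hsb : lt s b) by exact (le_lt_trans (Hleast ub Hub) hub).
  exists s. split; [rewrite <- HV0; apply Hs|split; [exact hsb|]].
  intros C hC. split.
  - exact (proj1 (proj2 (Hcl C hC)) s hsb).
  - apply (sup_below_interleaved C V); [|exact Hs|exact Hcof].
    intros n. exact (proj2 (proj2 (HV n)) C hC).
Qed.

Lemma diagonal_cof_point (E : L -> L -> Prop) b0 : (forall a, club lt (E a)) ->
  exists b, lt b0 b /\ cof_ge b /\ forall a, lt a b -> E a b.
Proof.
  intros HE.
  destruct (choice (fun u x => lt u x /\ forall a, lt a u -> E a x) (clubs_inter_unbounded E HE))
    as [next Hnext].
  destruct (exists_recursive_above next b0) as [h Hh].
  assert (h_incr : forall y xi, lt y xi -> lt (h y) (h xi)).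
  { intros y xi hy. destruct (Hh xi) as [s [_ [Hs ->]]].
    exact (lt_trans (Hs y hy) (proj1 (Hnext s))). }
  assert (h_b0 : forall xi, lt b0 (h xi)).
  { intros xi. destruct (Hh xi) as [s [hs [_ ->]]]. exact (le_lt_trans hs (proj1 (Hnext s))). }
  assert (h_E : forall y xi a, lt y xi -> lt a (h y) -> E a (h xi)).
  { intros y xi a hy ha. destruct (Hh xi) as [s [_ [Hs ->]]].
    apply Hnext. exact (lt_trans ha (Hs y hy)). }
  destruct (least_strict_bound (fun x => exists xi, lt xi k /\ x = h xi)) as [b [Hb [Hbcof _]]].
  { destruct (proj1 Hlam k h) as [g Hg]. exists g. intros x [xi [hxi ->]]. exact (Hg xi hxi). }
  assert (Hhb : forall xi, lt xi k -> lt (h xi) b) by (intros xi hxi; apply Hb; eauto).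
  assert (Happ : forall y, lt y b -> exists xi, lt xi k /\ lt y (h xi)).
  { intros y hy. destruct (Hbcof y hy) as [x [[xi [hxi ->]] hle]].
    destruct (cof_ge_limit (proj1 Hkap) hxi) as [xi' [h1 h2]].
    exists xi'. split; [exact h2|exact (le_lt_trans hle (h_incr _ _ h1))]. }
  destruct omega_lt_kappa as [w [_ [hw _]]].
  assert (hb0b : lt b0 b) by exact (lt_trans (h_b0 w) (Hhb w hw)).
  exists b. split; [exact hb0b|split].
  - intros a ha f Hf.
    destruct (choice (fun x xi => lt x a -> lt xi k /\ lt (f x) (h xi))) as [xf Hxf].
    { intros x. destruct (classic (lt x a)) as [hx|hx]; [|exists k; tauto].
      destruct (Happ (f x) (Hf x hx)) as [xi Hxi]. exists xi. auto. }
    destruct (proj1 Hkap a ha xf (fun x hx => proj1 (Hxf x hx))) as [z [hz Hz]].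
    exists (h z). split; [exact (Hhb z hz)|]. intros x hx.
    exact (lt_trans (proj2 (Hxf x hx)) (h_incr _ _ (Hz x hx))).
  - intros a ha. apply (proj2 (HE a)); [exists b0; exact hb0b|].
    destruct (Happ a ha) as [xi [hxi hax]].
    intros y hy. destruct (Happ y hy) as [z [hz hyz]].
    destruct (le_max z xi) as [m [hzm [hxim hm]]].
    assert (hmk : lt m k) by (destruct hm as [->| ->]; assumption).
    destruct (cof_ge_limit (proj1 Hkap) hmk) as [z' [hmz' hz'k]].
    exists (h z'). repeat split.
    + exact (h_E xi z' a (le_lt_trans hxim hmz') hax).
    + exact (lt_trans hyz (h_incr _ _ (le_lt_trans hzm hmz'))).
    + exact (Hhb z' hz'k).
Qed.

Section Square.
Variable Cs : L -> (L -> Prop) -> Prop.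
Hypothesis Hcoh : coherent_seq lt k Cs.

Definition acc_everywhere (a x : L) : Prop := lt a x /\ forall C, Cs x C -> acc lt C a.
Definition acc_nowhere (a x : L) : Prop := lt a x /\ forall C, Cs x C -> ~ acc lt C a.

Lemma acc_nowhere_stationary a : ~ A_set lt Cs a -> stationary lt (acc_nowhere a).
Proof.
  intros HA D HD. apply NNPP. intros Hn. apply HA.
  exists (fun x => D x /\ lt a x). split; [exact (club_above a HD)|].
  intros x [hDx hax]. apply NNPP. intros Hx. apply Hn. exists x.
  split; [|exact hDx]. split; [exact hax|]. intros C hC hacc. apply Hx. eauto.
Qed.

Lemma acc_nowhere_everywhere_no_reflection a :
  ~ exists g, reflects_at lt (acc_nowhere a) g /\ reflects_at lt (acc_everywhere a) g.
Proof.
  intros [g [[Hg HSg] [_ HTg]]]. destruct Hcoh as [Hne [Hcl [_ [_ Hrestr]]]].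
  destruct (Hne g) as [C0 HC0].
  assert (hag : lt a g).
  { assert (Hg_club : club_in lt g (fun x => lt x g)).
    { split; [auto|split; [|auto]]. intros x hx. exists x. split; [exact hx|apply le_refl]. }
    destruct (HSg _ Hg_club) as [x [[[hax _] _] hxg]]. exact (lt_trans hax hxg). }
  pose proof (acc_club_in Hg (Hcl g C0 HC0) hag) as HK.
  destruct (HSg _ HK) as [x1 [[[hax1 Hx1] _] [hacc1 _]]].
  destruct (HTg _ HK) as [x2 [[[hax2 Hx2] _] [hacc2 _]]].
  destruct (Hrestr g C0 HC0 x1 hacc1) as [E1 [HE1 HE1e]].
  destruct (Hrestr g C0 HC0 x2 hacc2) as [E2 [HE2 HE2e]].
  apply (Hx1 E1 HE1). apply (proj1 (acc_restrict E1 hax1 (proj2 hacc1) HE1e)).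
  apply (proj2 (acc_restrict E2 hax2 (proj2 hacc2) HE2e)). exact (Hx2 E2 HE2).
Qed.

Lemma acc_everywhere_stationary b : exists a, le lt b a /\ stationary lt (acc_everywhere a).
Proof.
  apply NNPP. intros Hno.
  destruct (choice (fun a D => club lt D /\ (le lt b a -> forall x, acc_everywhere a x -> ~ D x)))
    as [E HE].
  { intros a. destruct (classic (le lt b a)) as [hba|hba].
    - assert (Hns : ~ stationary lt (acc_everywhere a)) by eauto.
      destruct (not_all_ex_not _ _ Hns) as [D HD]. apply imply_to_and in HD as [HD1 HD2].
      exists D. split; [exact HD1|]. intros _ x hx hDx. apply HD2. eauto.
    - exists (fun _ => True). split; [|tauto].
      split; [intros y; exists y; split; [exact I|apply le_refl]|auto]. }
  destruct (diagonal_cof_point E b (fun a => proj1 (HE a))) as [be [hbbe [Hcof HEbe]]].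
  destruct Hcoh as [Hne [Hcl [Hcard _]]].
  destruct (small_family_common_acc Hcof hbbe (Hcl be) (Hcard be) (Hne be))
    as [s [hbs [hsbe Hacc]]].
  apply (proj2 (HE s) (or_introl hbs) be); [split; assumption|]. exact (HEbe s hsbe).
Qed.

End Square.
End Ordinals.

Theorem theorem2p12 (L : Type) (lt : L -> L -> Prop) (k : L)
  (Hwo : strict_wellorder lt)
  (Hlam : regular_uncountable_top lt)
  (Hkap : regular_uncountable_below lt k)
  (Cs : L -> (L -> Prop) -> Prop)
  (Hsq : square_seq lt k Cs)
  (Hnf : ~ full lt Cs) :
  exists S T : L -> Prop, stationary lt S /\ stationary lt T /\
    ~ exists a, reflects_at lt S a /\ reflects_at lt T a.
Proof.
  destruct Hsq as [Hcoh _].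
  destruct (not_all_ex_not _ _ Hnf) as [b Hb].
  destruct (acc_everywhere_stationary Hwo Hlam Hkap Hcoh b) as [a [hba HT]].
  exists (acc_nowhere lt Cs a), (acc_everywhere lt Cs a).
  split; [|split; [exact HT|exact (acc_nowhere_everywhere_no_reflection (a := a) Hwo Hcoh)]].
  apply (acc_nowhere_stationary Hwo Hlam). intros HA. apply Hb. eauto.
Qed.
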